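(* For every Baire metric space $X$, $dis(X)\geq\Delta(X)$.
   Context: $dis(X)$ denotes the least cardinal $\tau$ such that $X$ is the union of $\tau$ discrete subspaces. $\Delta(X)$ is the least cardinality of a non-empty open subset of $X$. *)

From Stdlib Require Import Reals.
Open Scope R_scope.

Definition is_metric {X : Type} (d : X -> X -> R) : Prop :=
  (forall x y, 0 <= d x y) /\
  (forall x y, d x y = 0 <-> x = y) /\
  (forall x y, d x y = d y x) /\
  (forall x y z, d x z <= d x y + d y z).

Definition ball {X : Type} (d : X -> X -> R) (x : X) (r : R) : X -> Prop :=
  fun y => d x y < r.

Definition is_open {X : Type} (d : X -> X -> R) (U : X -> Prop) : Prop :=
  forall x, U x -> exists r, 0 < r /\ forall y, ball d x r y -> U y.

Definition is_dense {X : Type} (d : X -> X -> R) (A : X -> Prop) : Prop :=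
  forall U, is_open d U -> (exists x, U x) -> exists x, U x /\ A x.

Definition is_Baire {X : Type} (d : X -> X -> R) : Prop :=
  forall G : nat -> X -> Prop,
    (forall n, is_open d (G n) /\ is_dense d (G n)) ->
    is_dense d (fun x => forall n, G n x).

Definition is_discrete_subspace {X : Type} (d : X -> X -> R) (D : X -> Prop) : Prop :=
  forall x, D x -> exists r, 0 < r /\ forall y, D y -> ball d x r y -> y = x.

Definition card_le_set {X I : Type} (U : X -> Prop) : Prop :=
  exists f : X -> I, forall x y, U x -> U y -> f x = f y -> x = y.

From Stdlib Require Import Reals Lra Lia List Cantor Classical ClassicalEpsilon
  FunctionalExtensionality PropExtensionality.
From mathcomp Require classical_sets.

(* Let X be covered by
   discrete subspaces D_i (i in I) and choose for every x an index idx x with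
   x in D_(idx x).
   - If X has an isolated point a, the open set {a} injects into I.
   - Otherwise let E_n be the set of points x isolated at scale 1/(n+1) inside
     their own piece D_(idx x).  The E_n cover X, so by the Baire property some
     E_n is dense in a ball B of radius at most 1/(4(n+1)).  On E_n inside B the
     map idx is injective.  Since B is infinite this gives an injection
     nat -> I, and y |-> (idx y, idx e_y, k_y), where e_y is a point of E_n
     near y and y is isolated at scale 1/(k_y+1), injects B into I x I x nat.
   - Hessenberg's theorem (an infinite I satisfies |I x I| = |I|, derived from
     Zorn's lemma and the comparability of cardinals) turns this into B -> I. *)

Definition incl {T : Type} (A B : T -> Prop) : Prop := forall x, A x -> B x.

Definition chain {T : Type} (F : (T -> Prop) -> Prop) : Prop :=
  forall A B, F A -> F B -> incl A B \/ incl B A.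

Definition union_of {T : Type} (F : (T -> Prop) -> Prop) : T -> Prop :=
  fun x => exists A, F A /\ A x.

Lemma pred_ext {T : Type} (A B : T -> Prop) : incl A B -> incl B A -> A = B.
Proof.
  intros hAB hBA. apply functional_extensionality. intro x.
  apply propositional_extensionality. split; auto.
Qed.

Lemma union_of_bigcup {T : Type} (F : classical_sets.set (classical_sets.set T)) :
  classical_sets.bigcup F (fun A => A) = union_of F.
Proof.
  apply pred_ext; [intros x [A hA hx] | intros x [A [hA hx]]]; [exists A | exists A]; auto.
Qed.

Lemma zorn_chains (T : Type) (P : (T -> Prop) -> Prop) :
  (forall F, (forall A, F A -> P A) -> chain F -> P (union_of F)) ->
  exists M, P M /\ forall N, P N -> incl M N -> incl N M.
Proof.
  intros hclosed.
  destruct (@classical_sets.Zorn_bigcup T P) as [M [hM hmax]].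
  - intros F hF htot. rewrite (union_of_bigcup F). apply hclosed; [exact hF |].
    intros A B hA hB. exact (htot A B hA hB).
  - exists M. split; [exact hM |].
    intros N hN hMN. apply NNPP. intro hNM. exact (hmax N (conj hMN hNM) hN).
Qed.

(* Variant for families closed only under unions of nonempty chains but having
   a nonempty member: adjoin the empty set to the family. *)
Lemma zorn_nonempty_chains (T : Type) (P : (T -> Prop) -> Prop) :
  (exists A x, P A /\ A x) ->
  (forall F, (forall A, F A -> P A) -> (exists A, F A) -> chain F -> P (union_of F)) ->
  exists M, P M /\ forall N, P N -> incl M N -> incl N M.
Proof.
  intros [A0 [x0 [hA0 hx0]]] hclosed.
  destruct (zorn_chains T (fun A => P A \/ forall x, ~ A x)) as [M [hM hmax]].
  - intros F hF hch.
    destruct (classic (exists A, F A /\ P A)) as [[A [hFA hPA]] | hnone].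
    + left. replace (union_of F) with (union_of (fun A => F A /\ P A)).
      * apply hclosed; [tauto | eauto |].
        intros B C [hB _] [hC _]. exact (hch B C hB hC).
      * apply pred_ext.
        -- intros x [B [[hB _] hBx]]. exists B; auto.
        -- intros x [B [hB hBx]]. exists B. split; [split|]; auto.
           destruct (hF B hB) as [hPB | hempty]; [exact hPB | now destruct (hempty x)].
    + right. intros x [B [hB hBx]].
      destruct (hF B hB) as [hPB | hempty]; [apply hnone; eauto | exact (hempty x hBx)].
  - assert (hPM : P M).
    { (* M cannot be empty, since the empty set is strictly below A0 *)
      destruct hM as [hPM | hempty]; [exact hPM |].
      assert (hM_A0 : incl M A0) by (intros x hx; destruct (hempty x hx)).
      destruct (hempty x0 (hmax A0 (or_introl hA0) hM_A0 x0 hx0)). }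
    exists M. split; [exact hPM |].
    intros N hN. exact (hmax N (or_introl hN)).
Qed.

Definition inj_on {T J : Type} (S : T -> Prop) (f : T -> J) : Prop :=
  forall x y, S x -> S y -> f x = f y -> x = y.

Record partial_bij {T : Type} (S1 S2 : T -> Prop) (M : T * T -> Prop) : Prop := {
  pbij_dom : forall x y, M (x, y) -> S1 x /\ S2 y;
  pbij_fun : forall x y y', M (x, y) -> M (x, y') -> y = y';
  pbij_inj : forall x x' y, M (x, y) -> M (x', y) -> x = x' }.

Lemma injection_of_relation {T : Type} (S : T -> Prop) (R : T -> T -> Prop) :
  (forall x, S x -> exists y, R x y) ->
  (forall x x' y, R x y -> R x' y -> x = x') ->
  exists f : T -> T, (forall x, S x -> R x (f x)) /\ inj_on S f.
Proof.
  intros htot hinj.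
  destruct (choice (fun x y => S x -> R x y)) as [f hf].
  - intro x. destruct (classic (S x)) as [hx | hx].
    + destruct (htot x hx) as [y hy]. eauto.
    + exists x. tauto.
  - exists f. split; [exact hf |].
    intros x x' hx hx' e. apply (hinj x x' (f x)); [auto | rewrite e; auto].
Qed.

Lemma partial_bij_union {T : Type} (S1 S2 : T -> Prop) (F : (T * T -> Prop) -> Prop) :
  (forall M, F M -> partial_bij S1 S2 M) -> chain F -> partial_bij S1 S2 (union_of F).
Proof.
  intros hF hch. split.
  - intros x y [M [hM hxy]]. exact (pbij_dom _ _ _ (hF M hM) x y hxy).
  - intros x y y' [M [hM h]] [M' [hM' h']].
    destruct (hch M M' hM hM') as [s | s].
    + exact (pbij_fun _ _ _ (hF M' hM') x y y' (s _ h) h').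
    + exact (pbij_fun _ _ _ (hF M hM) x y y' h (s _ h')).
  - intros x x' y [M [hM h]] [M' [hM' h']].
    destruct (hch M M' hM hM') as [s | s].
    + exact (pbij_inj _ _ _ (hF M' hM') x x' y (s _ h) h').
    + exact (pbij_inj _ _ _ (hF M hM) x x' y h (s _ h')).
Qed.

Lemma partial_bij_extend {T : Type} (S1 S2 : T -> Prop) (M : T * T -> Prop) x0 y0 :
  partial_bij S1 S2 M -> S1 x0 -> S2 y0 ->
  (forall y, ~ M (x0, y)) -> (forall x, ~ M (x, y0)) ->
  partial_bij S1 S2 (fun p => M p \/ p = (x0, y0)).
Proof.
  intros [hdom hfun hinj] hx0 hy0 hfx hfy. split.
  - intros x y [h | h]; [auto | inversion h; subst; auto].
  - intros x y y' [h | h] [h' | h'];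
      try (inversion h; subst); try (inversion h'; subst); eauto;
      exfalso; eapply hfx; eauto.
  - intros x x' y [h | h] [h' | h'];
      try (inversion h; subst); try (inversion h'; subst); eauto;
      exfalso; eapply hfy; eauto.
Qed.

(* Comparability of cardinalities: of two subsets of T, one injects into the
   other.  A maximal partial injection is total on one of the two sides. *)
Lemma subsets_comparable (T : Type) (S1 S2 : T -> Prop) :
  (exists f : T -> T, (forall x, S1 x -> S2 (f x)) /\ inj_on S1 f) \/
  (exists f : T -> T, (forall y, S2 y -> S1 (f y)) /\ inj_on S2 f).
Proof.
  destruct (zorn_chains (T * T) (partial_bij S1 S2) (partial_bij_union S1 S2))
    as [M [hM hmax]].
  pose proof hM as [hdom hfun hinj].
  destruct (classic (forall x, S1 x -> exists y, M (x, y))) as [hleft | hleft].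
  { left. destruct (injection_of_relation S1 (fun x y => M (x, y)) hleft hinj)
      as [f [hf hfinj]].
    exists f. split; [intros x hx; exact (proj2 (hdom _ _ (hf x hx))) | exact hfinj]. }
  destruct (classic (forall y, S2 y -> exists x, M (x, y))) as [hright | hright].
  { right. destruct (injection_of_relation S2 (fun y x => M (x, y)) hright
      (fun y y' x h h' => hfun x y y' h h')) as [f [hf hfinj]].
    exists f. split; [intros y hy; exact (proj1 (hdom _ _ (hf y hy))) | exact hfinj]. }
  exfalso.
  apply not_all_ex_not in hleft as [x0 hx0]. apply imply_to_and in hx0 as [hx0 hfx].
  apply not_all_ex_not in hright as [y0 hy0]. apply imply_to_and in hy0 as [hy0 hfy].
  apply hfx. exists y0.
  apply (hmax (fun p => M p \/ p = (x0, y0))); [| intros p hp; now left | now right].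
  apply partial_bij_extend; eauto.
Qed.

(* A partial pairing
   is encoded as one set M over I + I * I * I: [inl a] says a belongs to its
   domain A, [inr (a, b, c)] says that the pair (a, b) is coded by c. *)
Section Hessenberg.
Local Open Scope nat_scope.
Variable I : Type.
Variable g : nat -> I.
Hypothesis g_inj : forall m n, g m = g n -> m = n.

Record is_pairing (M : I + I * I * I -> Prop) : Prop := {
  pairing_base : forall n, M (inl (g n));
  pairing_fun : forall a b c c', M (inr (a, b, c)) -> M (inr (a, b, c')) -> c = c';
  pairing_inj : forall a b a' b' c,
    M (inr (a, b, c)) -> M (inr (a', b', c)) -> a = a' /\ b = b';
  pairing_total : forall a b, M (inl a) -> M (inl b) -> exists c, M (inr (a, b, c));
  pairing_dom : forall a b c,
    M (inr (a, b, c)) -> M (inl a) /\ M (inl b) /\ M (inl c) }.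

Definition cantor_pairing (t : I + I * I * I) : Prop :=
  match t with
  | inl a => exists n, a = g n
  | inr (a, b, c) => exists m n, a = g m /\ b = g n /\ c = g (to_nat (m, n))
  end.

Lemma cantor_pairing_is_pairing : is_pairing cantor_pairing.
Proof.
  split; simpl.
  - intro n; exists n; auto.
  - intros a b c c' [m [n [-> [-> ->]]]] [m' [n' [e1 [e2 ->]]]].
    apply g_inj in e1, e2. now subst.
  - intros a b a' b' c [m [n [-> [-> ->]]]] [m' [n' [-> [-> e]]]].
    injection (to_nat_inj (m, n) (m', n') (g_inj _ _ e)) as -> ->. auto.
  - intros a b [m ->] [n ->]. exists (g (to_nat (m, n))), m, n. auto.
  - intros a b c [m [n [-> [-> ->]]]]. repeat split; eexists; reflexivity.
Qed.

Lemma pairing_union (F : (I + I * I * I -> Prop) -> Prop) :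
  (forall M, F M -> is_pairing M) -> (exists M, F M) -> chain F ->
  is_pairing (union_of F).
Proof.
  intros hF [M0 hM0] hch.
  assert (hboth : forall M M' t t', F M -> F M' -> M t -> M' t' ->
            exists N, F N /\ N t /\ N t').
  { intros M M' t t' hM hM' ht ht'.
    destruct (hch M M' hM hM') as [s | s]; [exists M' | exists M]; auto. }
  split.
  - intro n. exists M0. split; [exact hM0 | apply (hF M0 hM0)].
  - intros a b c c' [M [hM h]] [M' [hM' h']].
    destruct (hboth M M' _ _ hM hM' h h') as [N [hN [k k']]].
    exact (pairing_fun _ (hF N hN) _ _ _ _ k k').
  - intros a b a' b' c [M [hM h]] [M' [hM' h']].
    destruct (hboth M M' _ _ hM hM' h h') as [N [hN [k k']]].
    exact (pairing_inj _ (hF N hN) _ _ _ _ _ k k').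
  - intros a b [M [hM h]] [M' [hM' h']].
    destruct (hboth M M' _ _ hM hM' h h') as [N [hN [k k']]].
    destruct (pairing_total _ (hF N hN) _ _ k k') as [c hc].
    exists c, N. auto.
  - intros a b c [M [hM h]].
    destruct (pairing_dom _ (hF M hM) _ _ _ h) as [ha [hb hc]].
    repeat split; exists M; auto.
Qed.

(* Extension step: if the domain A of a pairing injects via phi into its
   complement, the pairing extends to A u phi(A).  The three new blocks of
   (A u phi A)^2, namely A x phi A, phi A x A and phi A x phi A (tags t = 0,1,2),
   are coded inside phi A: the pair of tag t built from a, b in A gets the code
   phi (code (code (a, b), g t)). *)
Section Extension.
Variable M : I + I * I * I -> Prop.
Hypothesis M_pairing : is_pairing M.
Variable phi : I -> I.
Hypothesis phi_out : forall a, M (inl a) -> ~ M (inl (phi a)).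
Hypothesis phi_inj : inj_on (fun a => M (inl a)) phi.

Definition block_fst (t : nat) (a : I) : I := match t with 0 => a | _ => phi a end.
Definition block_snd (t : nat) (b : I) : I := match t with 1 => b | _ => phi b end.

Lemma blocks_disjoint t t' a a' b b' : t <= 2 -> t' <= 2 ->
  M (inl a) -> M (inl a') -> M (inl b) -> M (inl b') ->
  block_fst t a = block_fst t' a' -> block_snd t b = block_snd t' b' ->
  t = t' /\ a = a' /\ b = b'.
Proof.
  intros ht ht' ha ha' hb hb' e1 e2.
  destruct t as [|[|[|t]]]; try lia; destruct t' as [|[|[|t']]]; try lia;
    simpl in e1, e2;
    try (split; [reflexivity | split]; first [assumption | apply phi_inj; assumption]; fail);
    exfalso;
    first [ apply (phi_out a'); [| rewrite <- e1]; assumption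
          | apply (phi_out a); [| rewrite e1]; assumption
          | apply (phi_out b'); [| rewrite <- e2]; assumption
          | apply (phi_out b); [| rewrite e2]; assumption ].
Qed.

Lemma blocks_outside t a b : t <= 2 -> M (inl a) -> M (inl b) ->
  M (inl (block_fst t a)) -> M (inl (block_snd t b)) -> False.
Proof.
  intros ht ha hb h1 h2.
  destruct t as [|[|[|t]]]; try lia; simpl in h1, h2.
  - exact (phi_out b hb h2).
  - exact (phi_out a ha h1).
  - exact (phi_out a ha h1).
Qed.

Definition new_code (x y z : I) : Prop :=
  exists a b c e t, t <= 2 /\ M (inr (a, b, c)) /\ M (inr (c, g t, e)) /\
    x = block_fst t a /\ y = block_snd t b /\ z = phi e.

Definition extension (t : I + I * I * I) : Prop :=
  match t with
  | inl x => M (inl x) \/ exists a, M (inl a) /\ x = phi a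
  | inr (x, y, z) => M (inr (x, y, z)) \/ new_code x y z
  end.

Lemma new_code_not_old x y z z' : new_code x y z -> ~ M (inr (x, y, z')).
Proof.
  intros [a [b [c [e [t [ht [hc [he [-> [-> ->]]]]]]]]]] hold.
  destruct (pairing_dom _ M_pairing _ _ _ hc) as [ha [hb _]].
  destruct (pairing_dom _ M_pairing _ _ _ hold) as [h1 [h2 _]].
  exact (blocks_outside t a b ht ha hb h1 h2).
Qed.

Lemma new_code_value_new x y z : new_code x y z -> ~ M (inl z).
Proof.
  intros [a [b [c [e [t [ht [hc [he [-> [-> ->]]]]]]]]]].
  apply phi_out. apply (pairing_dom _ M_pairing _ _ _ he).
Qed.

Lemma new_code_fun x y z z' : new_code x y z -> new_code x y z' -> z = z'.
Proof.
  intros [a [b [c [e [t [ht [hc [he [-> [-> ->]]]]]]]]]]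
         [a' [b' [c' [e' [t' [ht' [hc' [he' [e1 [e2 ->]]]]]]]]]].
  destruct (pairing_dom _ M_pairing _ _ _ hc) as [ha [hb _]].
  destruct (pairing_dom _ M_pairing _ _ _ hc') as [ha' [hb' _]].
  destruct (blocks_disjoint t t' a a' b b') as [-> [-> ->]]; auto.
  rewrite (pairing_fun _ M_pairing _ _ _ _ hc hc') in he.
  now rewrite (pairing_fun _ M_pairing _ _ _ _ he he').
Qed.

Lemma new_code_inj x y x' y' z : new_code x y z -> new_code x' y' z -> x = x' /\ y = y'.
Proof.
  intros [a [b [c [e [t [ht [hc [he [-> [-> ->]]]]]]]]]]
         [a' [b' [c' [e' [t' [ht' [hc' [he' [-> [-> ez]]]]]]]]]].
  apply phi_inj in ez;
    [| apply (pairing_dom _ M_pairing _ _ _ he) | apply (pairing_dom _ M_pairing _ _ _ he')].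
  subst e'.
  destruct (pairing_inj _ M_pairing _ _ _ _ _ he he') as [<- et].
  apply g_inj in et as <-.
  now destruct (pairing_inj _ M_pairing _ _ _ _ _ hc hc') as [<- <-].
Qed.

Lemma new_code_total t a b : t <= 2 -> M (inl a) -> M (inl b) ->
  exists z, new_code (block_fst t a) (block_snd t b) z.
Proof.
  intros ht ha hb.
  destruct (pairing_total _ M_pairing a b ha hb) as [c hc].
  destruct (pairing_dom _ M_pairing _ _ _ hc) as [_ [_ hcA]].
  destruct (pairing_total _ M_pairing c (g t) hcA (pairing_base _ M_pairing t)) as [e he].
  exists (phi e), a, b, c, e, t. repeat split; auto.
Qed.

Lemma extension_is_pairing : is_pairing extension.
Proof.
  split; simpl.
  - intro n. left. apply (pairing_base _ M_pairing).
  - intros x y z z' [h | h] [h' | h'].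
    + exact (pairing_fun _ M_pairing _ _ _ _ h h').
    + destruct (new_code_not_old x y z' z h' h).
    + destruct (new_code_not_old x y z z' h h').
    + exact (new_code_fun x y z z' h h').
  - intros x y x' y' z [h | h] [h' | h'].
    + exact (pairing_inj _ M_pairing _ _ _ _ _ h h').
    + destruct (new_code_value_new _ _ _ h' (proj2 (proj2 (pairing_dom _ M_pairing _ _ _ h)))).
    + destruct (new_code_value_new _ _ _ h (proj2 (proj2 (pairing_dom _ M_pairing _ _ _ h')))).
    + exact (new_code_inj x y x' y' z h h').
  - intros x y [hx | [a [ha ->]]] [hy | [b [hb ->]]].
    + destruct (pairing_total _ M_pairing x y hx hy) as [z hz]. exists z. now left.
    + destruct (new_code_total 0 x b) as [z hz]; auto. exists z. now right.
    + destruct (new_code_total 1 a y) as [z hz]; auto. exists z. now right.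
    + destruct (new_code_total 2 a b) as [z hz]; auto. exists z. now right.
  - intros x y z [h | [a [b [c [e [t [ht [hc [he [-> [-> ->]]]]]]]]]]].
    + destruct (pairing_dom _ M_pairing _ _ _ h) as [hx [hy hz]]. auto.
    + destruct (pairing_dom _ M_pairing _ _ _ hc) as [ha [hb _]].
      destruct (pairing_dom _ M_pairing _ _ _ he) as [_ [_ heA]].
      split; [| split]; [| | right; eauto];
        destruct t as [|[|t]]; simpl; eauto.
Qed.

Lemma extension_grows : incl M extension.
Proof. intros [x | [[x y] z]] h; simpl; now left. Qed.
End Extension.

Lemma pairing_square_inj (M : I + I * I * I -> Prop) (theta : I -> I) :
  is_pairing M -> (forall x, M (inl (theta x))) -> (forall x y, theta x = theta y -> x = y) ->
  exists h : I * I -> I, forall p q, h p = h q -> p = q.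
Proof.
  intros hM htheta htheta_inj.
  destruct (choice (fun p c => M (inr (theta (fst p), theta (snd p), c)))) as [h hh].
  { intros [x y]. apply (pairing_total _ hM); apply htheta. }
  exists h. intros [x y] [x' y'] e.
  pose proof (hh (x, y)) as hxy. pose proof (hh (x', y')) as hxy'.
  simpl in hxy, hxy'. rewrite e in hxy.
  destruct (pairing_inj _ hM _ _ _ _ _ hxy hxy') as [e1 e2].
  apply htheta_inj in e1, e2. now subst.
Qed.
(* If the complement of the domain A injects into A, then I injects into A:
   x |-> code (x, g 0) on A and x |-> code (psi x, g 1) off A. *)
Lemma complement_into_domain (M : I + I * I * I -> Prop) (psi : I -> I) :
  is_pairing M ->
  (forall x, ~ M (inl x) -> M (inl (psi x))) -> inj_on (fun x => ~ M (inl x)) psi ->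
  exists theta : I -> I, (forall x, M (inl (theta x))) /\
                         (forall x y, theta x = theta y -> x = y).
Proof.
  intros hM hpsi hpsi_inj.
  set (tagged x := if excluded_middle_informative (M (inl x)) then (x, g 0) else (psi x, g 1)).
  assert (htagged : forall x, M (inl (fst (tagged x))) /\ M (inl (snd (tagged x)))).
  { intro x. unfold tagged. destruct (excluded_middle_informative (M (inl x))) as [hx | hx];
      simpl; split; auto; apply (pairing_base _ hM). }
  destruct (choice (fun x c => M (inr (fst (tagged x), snd (tagged x), c)))) as [theta htheta].
  { intro x. apply (pairing_total _ hM); apply htagged. }
  exists theta. split.
  - intro x. apply (pairing_dom _ hM _ _ _ (htheta x)).
  - intros x y e. pose proof (htheta y) as hy. rewrite <- e in hy.
    destruct (pairing_inj _ hM _ _ _ _ _ (htheta x) hy) as [e1 e2].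
    unfold tagged in e1, e2.
    destruct (excluded_middle_informative (M (inl x))) as [hx | hx];
      destruct (excluded_middle_informative (M (inl y))) as [hy' | hy'];
      simpl in e1, e2; auto;
      try (apply g_inj in e2; discriminate).
Qed.

(* A maximal pairing M cannot have a domain A injecting into its complement
   (it would extend); hence the complement injects into A, so I injects into A
   and the pairing codes all of I x I. *)
Theorem hessenberg : exists h : I * I -> I, forall p q, h p = h q -> p = q.
Proof.
  destruct (zorn_nonempty_chains _ is_pairing) as [M [hM hmax]].
  - exists cantor_pairing, (inl (g 0)).
    split; [apply cantor_pairing_is_pairing | now exists 0].
  - exact pairing_union.
  - destruct (subsets_comparable I (fun a => M (inl a)) (fun a => ~ M (inl a)))
      as [[phi [hout hinj]] | [psi [hin hinj]]].
    + (* A injects into its complement: the extension contradicts maximality *)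
      exfalso. apply (hout (g 0) (pairing_base _ hM 0)).
      apply (hmax _ (extension_is_pairing M hM phi hout hinj) (extension_grows M phi)
               (inl (phi (g 0)))).
      right. exists (g 0). split; [apply (pairing_base _ hM) | reflexivity].
    + destruct (complement_into_domain M psi hM hin hinj) as [theta [htheta htheta_inj]].
      exact (pairing_square_inj M theta hM htheta htheta_inj).
Qed.
Lemma triples_inject : exists k : I * I * nat -> I, forall p q, k p = k q -> p = q.
Proof.
  destruct hessenberg as [h hh].
  exists (fun t => h (h (fst (fst t), snd (fst t)), g (snd t))).
  intros [[a b] t] [[a' b'] t'] e. simpl in e.
  injection (hh _ _ e) as e1 e2. injection (hh _ _ e1) as -> ->. now rewrite (g_inj _ _ e2).
Qed.
End Hessenberg.

Open Scope R_scope.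

Lemma injective_sequence {T : Type} (P : T -> Prop) :
  (forall l : list T, exists z, P z /\ ~ In z l) ->
  exists s : nat -> T, (forall m, P (s m)) /\ (forall m p, s m = s p -> m = p).
Proof.
  intro havoid. destruct (choice _ havoid) as [next hnext].
  (* prefix m lists the first m terms, the next term avoids all of them *)
  set (prefix := fix prefix (m : nat) : list T :=
         match m with O => nil | S m' => next (prefix m') :: prefix m' end).
  assert (hearlier : forall m p, (m < p)%nat -> In (next (prefix m)) (prefix p)).
  { intros m p; induction p as [| p IH]; intro hmp; [lia |].
    simpl. destruct (Nat.eq_dec m p) as [-> | hne]; [now left | right; apply IH; lia]. }
  exists (fun m => next (prefix m)). split; [intro m; apply hnext |].
  intros m p e. destruct (Nat.lt_total m p) as [hlt | [heq | hgt]]; [| exact heq |].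
  - destruct (proj2 (hnext (prefix p))). rewrite <- e. auto.
  - destruct (proj2 (hnext (prefix m))). rewrite e. auto.
Qed.

Lemma card_le_set_compose {X J K : Type} (U : X -> Prop) (k : J -> K) :
  (forall a b, k a = k b -> a = b) -> @card_le_set X J U -> @card_le_set X K U.
Proof.
  intros hk [f hf]. exists (fun x => k (f x)). intros x y hx hy e. auto.
Qed.

Definition eps (n : nat) : R := / INR (S n).

Lemma eps_pos n : 0 < eps n.
Proof. apply Rinv_0_lt_compat, lt_0_INR. lia. Qed.

Lemma eps_small r : 0 < r -> exists n, eps n < r.
Proof.
  intro hr. destruct (INR_unbounded (/ r)) as [n hn]. exists n. unfold eps.
  assert (INR n < INR (S n)) by (apply lt_INR; lia).
  assert (0 < / r) by (apply Rinv_0_lt_compat; exact hr).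
  rewrite <- (Rinv_inv r). apply Rinv_lt_contravar; [apply Rmult_lt_0_compat |]; lra.
Qed.

Section MetricSpace.
Context {X : Type}.
Variable d : X -> X -> R.
Hypothesis hd : is_metric d.

Lemma d_pos x y : 0 <= d x y. Proof. apply hd. Qed.
Lemma d_refl x : d x x = 0. Proof. apply (proj1 (proj2 hd)). reflexivity. Qed.
Lemma d_sym x y : d x y = d y x. Proof. apply hd. Qed.
Lemma d_tri x y z : d x z <= d x y + d y z. Proof. apply hd. Qed.

Lemma d_neq_pos x y : x <> y -> 0 < d x y.
Proof.
  intro hne. destruct (Rle_lt_or_eq_dec 0 (d x y) (d_pos x y)) as [h | h]; [exact h |].
  destruct hne. apply (proj1 (proj2 hd)). auto.
Qed.

Lemma ball_open x r : is_open d (ball d x r).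
Proof.
  intros y hy. exists (r - d x y). unfold ball in *. split; [lra |].
  intros z hz. pose proof (d_tri x y z). lra.
Qed.

Lemma ball_center x r : 0 < r -> exists y, ball d x r y.
Proof. intro hr. exists x. unfold ball. now rewrite d_refl. Qed.

Lemma no_isolated_points :
  ~ (exists a r, 0 < r /\ forall y, d a y < r -> y = a) ->
  forall a e, 0 < e -> exists y, y <> a /\ d a y < e.
Proof.
  intros hno a e he. apply NNPP. intro hnone. apply hno. exists a, e. split; [exact he |].
  intros y hy. apply NNPP. intro hya. apply hnone. eauto.
Qed.

Definition dense_in_ball (E : X -> Prop) (x0 : X) (r : R) : Prop :=
  forall y, d x0 y < r -> forall e, 0 < e -> exists z, E z /\ d y z < e.

Lemma dense_in_ball_shrink E x0 r r' :
  r' <= r -> dense_in_ball E x0 r -> dense_in_ball E x0 r'.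
Proof. intros hle hdense y hy. apply hdense. lra. Qed.

(* Otherwise the
   points at positive distance from E n would form dense open sets with an
   empty intersection. *)
Lemma baire_somewhere_dense (E : nat -> X -> Prop) :
  is_Baire d -> (exists x : X, True) -> (forall x, exists n, E n x) ->
  exists n x0 r, 0 < r /\ dense_in_ball (E n) x0 r.
Proof.
  intros hB [x00 _] hcov. apply NNPP. intro hnone.
  set (far n y := exists e, 0 < e /\ forall z, E n z -> e <= d y z).
  assert (hfar : forall n, is_open d (far n) /\ is_dense d (far n)).
  { intro n. split.
    - intros y [e [he hy]]. exists (e / 2). split; [lra |].
      intros z hz. exists (e / 2). split; [lra |].
      intros w hw. pose proof (hy w hw). pose proof (d_tri y z w). unfold ball in hz. lra.
    - intros U hU [x hx]. destruct (hU x hx) as [r [hr hxr]].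
      assert (hnot : ~ dense_in_ball (E n) x r) by (intro h; apply hnone; eauto).
      apply not_all_ex_not in hnot as [y hy]. apply imply_to_and in hy as [hy hy'].
      apply not_all_ex_not in hy' as [e he]. apply imply_to_and in he as [he he'].
      exists y. split; [apply hxr; exact hy |].
      exists e. split; [exact he |].
      intros z hz. apply Rnot_lt_le. intro hlt. apply he'. eauto. }
  destruct (hB far hfar (fun _ => True)) as [y [_ hy]];
    [intros z _; exists 1; split; [lra | auto] | now exists x00 |].
  destruct (hcov y) as [n hn]. destruct (hy n) as [e [he hfar_y]].
  pose proof (hfar_y y hn). rewrite d_refl in *. lra.
Qed.

Lemma ball_avoiding_list (x0 : X) (r : R) :
  (forall a e, 0 < e -> exists y, y <> a /\ d a y < e) -> 0 < r ->
  forall l : list X, exists z e, 0 < e /\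
    forall w, d z w < e -> d x0 w < r /\ ~ In w l.
Proof.
  intros hperfect hr l. induction l as [| a l IH].
  - exists x0, r. split; [exact hr |]. intros w hw. split; [exact hw | intros []].
  - destruct IH as [z [e [he hz]]].
    (* move away from a if needed, then shrink the radius below d z a *)
    assert (hmove : exists z' e', 0 < e' /\ z' <> a /\ forall w, d z' w < e' -> d z w < e).
    { destruct (classic (z = a)) as [-> | hne].
      - destruct (hperfect a (e / 2) ltac:(lra)) as [y [hy hay]].
        exists y, (e / 2). repeat split; [lra | exact hy |].
        intros w hw. pose proof (d_tri a y w). lra.
      - exists z, e. auto. }
    destruct hmove as [z' [e' [he' [hz'a hz']]]].
    pose proof (d_neq_pos z' a hz'a).
    exists z', (Rmin e' (d z' a)). split; [apply Rmin_glb_lt; lra |].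
    intros w hw. pose proof (Rmin_l e' (d z' a)). pose proof (Rmin_r e' (d z' a)).
    destruct (hz w (hz' w ltac:(lra))) as [hw0 hwl]. split; [exact hw0 |].
    intros [-> | hin]; [lra | exact (hwl hin)].
Qed.
End MetricSpace.


Section DiscreteCover.
Context {X : Type}.
Variable d : X -> X -> R.
Hypothesis hd : is_metric d.
Context {I : Type}.
Variable D : I -> X -> Prop.
Hypothesis hD : forall i, is_discrete_subspace d (D i).
Variable idx : X -> I.
Hypothesis hidx : forall x, D (idx x) x.

Definition isolated_at (n : nat) (x : X) : Prop :=
  forall y, D (idx x) y -> d x y < eps n -> y = x.

Lemma isolated_at_some_scale x : exists n, isolated_at n x.
Proof.
  destruct (hD (idx x) x (hidx x)) as [r [hr hiso]].
  destruct (eps_small r hr) as [n hn]. exists n.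
  intros y hy hxy. apply hiso; [exact hy | unfold ball; lra].
Qed.

Lemma isolated_same_index n e e' :
  isolated_at n e -> idx e = idx e' -> d e e' < eps n -> e' = e.
Proof. intros he hidx_eq hclose. apply he; [rewrite hidx_eq; apply hidx | exact hclose]. Qed.

(* From now on, the points isolated at scale eps n are dense in a ball B of
   radius at most eps n / 4; distinct such points of B have distinct indices. *)
Section DenseLayer.
Variable n : nat.
Variable x0 : X.
Variable rho : R.
Hypothesis rho_small : rho <= eps n / 4.
Hypothesis layer_dense : dense_in_ball d (isolated_at n) x0 rho.

Lemma ball_diameter y y' : d x0 y < rho -> d x0 y' < rho -> d y y' < eps n / 2.
Proof.
  intros hy hy'. pose proof (d_tri d hd y x0 y'). rewrite (d_sym d hd y x0) in *. lra.
Qed.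

(* Each point y of B is coded by its own index, the index of a nearby point
   e of the dense layer and its own isolation scale k: the layer point e is
   determined by its index, and y by e, its index and k. *)
Lemma ball_injects_triples : @card_le_set X (I * I * nat) (ball d x0 rho).
Proof.
  destruct (choice _ isolated_at_some_scale) as [k hk].
  destruct (choice (fun y e => d x0 y < rho ->
              isolated_at n e /\ d y e < Rmin (eps (k y) / 3) (eps n / 4))) as [near hnear].
  { intro y. destruct (classic (d x0 y < rho)) as [hy | hy]; [| exists y; tauto].
    assert (hpos : 0 < Rmin (eps (k y) / 3) (eps n / 4)).
    { pose proof (eps_pos (k y)). pose proof (eps_pos n). apply Rmin_glb_lt; lra. }
    destruct (layer_dense y hy _ hpos) as [e he]. exists e. auto. }
  exists (fun y => (idx y, idx (near y), k y)).
  intros y y' hy hy' e. injection e as e_idx e_near e_k.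
  destruct (hnear y hy) as [he hye]. destruct (hnear y' hy') as [he' hye'].
  pose proof (Rmin_l (eps (k y) / 3) (eps n / 4)).
  pose proof (Rmin_r (eps (k y) / 3) (eps n / 4)).
  pose proof (Rmin_r (eps (k y') / 3) (eps n / 4)).
  pose proof (Rmin_l (eps (k y') / 3) (eps n / 4)).
  assert (hsame_near : near y' = near y).
  { apply (isolated_same_index n); [exact he | exact e_near |].
    pose proof (ball_diameter y y' hy hy').
    pose proof (d_tri d hd (near y) y (near y')). pose proof (d_tri d hd y y' (near y')).
    rewrite (d_sym d hd (near y) y) in *. lra. }
  symmetry. apply (isolated_same_index (k y)); [apply hk | exact e_idx |].
  rewrite <- e_k, hsame_near in hye'. pose proof (eps_pos (k y)).
  pose proof (d_tri d hd y (near y) y'). rewrite (d_sym d hd (near y) y') in *. lra.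
Qed.

(* Without isolated points, B contains infinitely many layer points, whose
   indices give an injection of nat into I. *)
Lemma nat_injects :
  (forall a e, 0 < e -> exists y, y <> a /\ d a y < e) -> 0 < rho ->
  exists g : nat -> I, forall m p, g m = g p -> m = p.
Proof.
  intros hperfect hrho.
  destruct (injective_sequence (fun z => isolated_at n z /\ d x0 z < rho)) as [s [hs hs_inj]].
  - intro l. destruct (ball_avoiding_list d hd x0 rho hperfect hrho l) as [z [e [he hz]]].
    destruct (layer_dense z (proj1 (hz z ltac:(rewrite (d_refl d hd); lra))) e he)
      as [w [hw hzw]].
    destruct (hz w hzw). eauto.
  - exists (fun m => idx (s m)). intros m p e. apply hs_inj. symmetry.
    destruct (hs m) as [hm hm0]. destruct (hs p) as [hp hp0].
    apply (isolated_same_index n); [exact hm | exact e |].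
    pose proof (ball_diameter _ _ hm0 hp0). pose proof (eps_pos n). lra.
Qed.
End DenseLayer.
End DiscreteCover.

Theorem mainTheorem3 (X : Type) (d : X -> X -> R) (hd : is_metric d)
  (hB : is_Baire d) (hne : exists x : X, True)
  (I : Type) (D : I -> X -> Prop)
  (hD : forall i, is_discrete_subspace d (D i))
  (hcov : forall x, exists i, D i x) :
  exists U : X -> Prop, is_open d U /\ (exists x, U x) /\ @card_le_set X I U.
Proof.
  destruct (choice _ hcov) as [idx hidx].
  destruct (classic (exists a r, 0 < r /\ forall y, d a y < r -> y = a))
    as [[a [r [hr ha]]] | hperfect].
  (* an isolated point a: the open ball {a} injects into I *)
  { exists (ball d a r). split; [apply ball_open, hd | split; [apply ball_center; auto |]].
    exists (fun _ => idx a). intros y y' hy hy' _. now rewrite (ha y hy), (ha y' hy'). }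
  pose proof (no_isolated_points d hperfect) as hperfect'.
  destruct (baire_somewhere_dense d hd (isolated_at d D idx) hB hne
              (isolated_at_some_scale d D hD idx hidx)) as [n [x0 [r [hr hdense]]]].
  pose (rho := Rmin r (eps n / 4)).
  assert (hrho : 0 < rho) by (pose proof (eps_pos n); apply Rmin_glb_lt; lra).
  pose proof (dense_in_ball_shrink d _ x0 r rho (Rmin_l _ _) hdense) as hdense'.
  destruct (nat_injects d hd D idx hidx n x0 rho (Rmin_r _ _) hdense' hperfect' hrho)
    as [g hg].
  destruct (triples_inject I g hg) as [k hk].
  exists (ball d x0 rho). split; [apply ball_open, hd | split; [apply ball_center; auto |]].
  apply (card_le_set_compose _ k hk).
  exact (ball_injects_triples d hd D hD idx hidx n x0 rho (Rmin_r _ _) hdense').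
Qed.
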